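(* Let $V=\mathbb{C}^n$ be the defining representation of $GL_n(\mathbb{C})$, restricted to $T\rtimes S_n$, and let $k\ge 0$. Let $A_k^n$ be the set of $k$-tuples of nonnegative integers $(a_1,\dots,a_k)$ with $a_1+2a_2+\dots+ka_k=k$ and $a_1+a_2+\dots+a_k\le n$. Then as representations of $T\rtimes S_n$, $$\mathrm{Sym}^k(V)\cong\bigoplus_{(a_1,\dots,a_k)\in A_k^n}\tilde{M}((a_1),(a_2),\dots,(a_k)),$$ where $(a)$ denotes the one-row partition with $a$ boxes (the empty partition if $a=0$).
   Context: Let $T\subset GL_n(\mathbb{C})$ be the diagonal torus, $S_n$ the permutation matrices, and $T\rtimes S_n\cong\mathbb{C}^\times\wr S_n$ the monomial matrices. For a partition $\lambda$ of $r$ and integer $k$, $S^{\lambda,k}$ is the representation of $\mathbb{C}^\times\wr S_r$ on the Specht module $S^\lambda$ with each copy of $\mathbb{C}^\times$ acting by $z\mapsto z^k$. For a composition $\nu=(\nu_1,\dots,\nu_\ell)$ of $n$ and integers $\mathbf{w}$, $M(\nu,\mathbf{w}):=\mathrm{Ind}_{(\mathbb{C}^\times\wr S_{\nu_1})\times\dots\times(\mathbb{C}^\times\wr S_{\nu_\ell})}^{\mathbb{C}^\times\wr S_n}(S^{(\nu_1),w_1}\otimes\dots\otimes S^{(\nu_\ell),w_\ell})$ (block-diagonal subgroup). For partitions $\lambda^1,\dots,\lambda^j$, $\lambda^i=(\lambda^i_1,\dots,\lambda^i_{\ell_i})$, of total size $m\le n$, $\tilde{M}(\lambda^1,\dots,\lambda^j):=M((n-m,\lambda^1_1,\dots,\lambda^1_{\ell_1},\dots,\lambda^j_1,\dots,\lambda^j_{\ell_j}),(0,1,\dots,1,\dots,j,\dots,j))$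 with $\ell_i$ entries equal to $i$ (the part $n-m$ omitted if zero). *)

From mathcomp Require Import all_boot all_order all_algebra.
From mathcomp Require Import Rstruct.
From mathcomp Require Import complex.
From mathcomp Require Import mpoly.
Set Implicit Arguments. Unset Strict Implicit. Unset Printing Implicit Defensive.
Import Order.TTheory GRing.Theory Num.Theory.
Local Open Scope ring_scope.

Notation C := (complex Rdefinitions.R).

(* The group T \rtimes S_n = C^x \wr S_n, realised as the group of monomial *)
(* matrices in GL_n(C) (group law = matrix product): every row and every    *)
(* column contains exactly one nonzero entry.                               *)
Definition monomial (n : nat) (g : 'M[C]_n) : bool :=
  [forall i, #|[pred j | g i j != 0]| == 1%N] &&
  [forall j, #|[pred i | g i j != 0]| == 1%N].

(* Sym^k(V), V = C^n the defining representation: Sym(V) is the polynomial  *)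
(* algebra on the standard basis e_1..e_n (the variables 'X_i), Sym^k(V) its *)
(* homogeneous degree-k part, and g acts by the algebra automorphism        *)
(* e_j |-> g e_j = \sum_i g_ij e_i.                                          *)
Definition SymSpace (n k : nat) (p : {mpoly C[n]}) : bool :=
  all (fun m => mdeg m == k) (msupp p).

Arguments SymSpace : clear implicits.

Definition sym_act (n : nat) (g : 'M[C]_n) (p : {mpoly C[n]}) : {mpoly C[n]} :=
  comp_mpoly [tuple \sum_(i < n) g i j *: 'X_i | j < n] p.

(* For a composition nu = (nu_1,...,nu_l) of n, index i (0-based) lies in   *)
(* block j iff nu_1+...+nu_j <= i < nu_1+...+nu_(j+1).                       *)
Definition block (nu : seq nat) (i : nat) : nat :=
  find (fun j => i < sumn (take j.+1 nu))%N (iota 0 (size nu)).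

(* The block-diagonal subgroup (C^x wr S_nu_1) x ... x (C^x wr S_nu_l):     *)
(* monomial matrices whose nonzero entries lie in the diagonal blocks.      *)
Definition in_block_subgroup (n : nat) (nu : seq nat) (h : 'M[C]_n) : bool :=
  monomial h &&
  [forall i, forall j, (h i j != 0) ==> (block nu i == block nu j)].

(* The one-dimensional representation S^{(nu_1),w_1} (x) ... (x) S^{(nu_l),w_l} *)
(* of the block subgroup: the one-row Specht module S^{(r)} is the trivial  *)
(* representation of S_r, and each copy of C^x in block j acts by z |-> z^{w_j}. *)
(* For a monomial h, the unique nonzero entry of row i is \sum_j h i j.      *)
Definition block_char (n : nat) (nu : seq nat) (w : seq int) (h : 'M[C]_n) : C :=
  \prod_(i < n) (\sum_(j < n) h i j) ^ (nth 0%R w (block nu i)).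

(* Induced representation (Frobenius / function model):                     *)
(*   Ind_H^G W = { f : G -> W | f (h x) = h . f(x) for h in H, x in G },     *)
(* with G acting by right translation (g . f)(x) = f (x g).  Functions are   *)
(* represented on all of 'M_n and required to vanish off G.                  *)
Definition MSpace (n : nat) (nu : seq nat) (w : seq int) (f : 'M[C]_n -> C) : Prop :=
  (forall x : 'M[C]_n, ~~ monomial x -> f x = 0) /\
  (forall h x : 'M[C]_n, in_block_subgroup nu h -> monomial x ->
     f (h *m x) = block_char nu w h * f x).

Definition ind_act (n : nat) (g : 'M[C]_n) (f : 'M[C]_n -> C) : 'M[C]_n -> C :=
  fun x => f (x *m g).

(* tilde M (lambda^1, ..., lambda^j) = M((n-m, lambda^1, ..., lambda^j),    *)
(* (0, 1,...,1, ..., j,...,j)), the part n-m omitted if zero.                *)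
Definition mtilde_comp (n : nat) (lams : seq (seq nat)) : seq nat :=
  let m := sumn (map sumn lams) in
  (if (n - m)%N == 0%N then [::] else [:: (n - m)%N]) ++ flatten lams.

Definition mtilde_wts (n : nat) (lams : seq (seq nat)) : seq int :=
  let m := sumn (map sumn lams) in
  (if (n - m)%N == 0%N then [::] else [:: 0%Z]) ++
  flatten [seq nseq (size (nth [::] lams i)) (Posz i.+1) | i <- iota 0 (size lams)].

Definition MtildeSpace (n : nat) (lams : seq (seq nat)) : ('M[C]_n -> C) -> Prop :=
  MSpace (mtilde_comp n lams) (mtilde_wts n lams).

Arguments MtildeSpace : clear implicits.

Definition one_row (a : nat) : seq nat := if a == 0%N then [::] else [:: a].

(* A_k^n : k-tuples (a_1,...,a_k) of nonnegative integers with              *)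
(* a_1 + 2 a_2 + ... + k a_k = k and a_1 + ... + a_k <= n.  A tuple is       *)
(* encoded as a : {ffun 'I_k -> 'I_k.+1}, a_(j+1) = a j (each a_i <= k is   *)
(* automatic from the first condition, so no tuple is lost).                *)
Definition in_A (n k : nat) (a : {ffun 'I_k -> 'I_k.+1}) : bool :=
  ((\sum_(j < k) j.+1 * a j == k) && (\sum_(j < k) a j <= n))%N.

Arguments in_A : clear implicits.

Definition tuple_parts (k : nat) (a : {ffun 'I_k -> 'I_k.+1}) : seq (seq nat) :=
  [seq one_row (a j) | j <- enum 'I_k].

(* The direct sum  \bigoplus_{a in A_k^n} tilde M((a_1),...,(a_k)):          *)
(* families F indexed by the tuples, with F a in the a-th summand for a in  *)
(* A_k^n and F a = 0 otherwise; G acts componentwise.                        *)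
Definition DSumSpace (n k : nat)
    (F : {ffun 'I_k -> 'I_k.+1} -> 'M[C]_n -> C) : Prop :=
  forall a : {ffun 'I_k -> 'I_k.+1}, (in_A n k a -> MtildeSpace n (tuple_parts a) (F a)) /\
            (~~ in_A n k a -> F a = fun _ => 0).

Arguments DSumSpace : clear implicits.

Definition dsum_act (n k : nat) (g : 'M[C]_n)
    (F : {ffun 'I_k -> 'I_k.+1} -> 'M[C]_n -> C) :
    {ffun 'I_k -> 'I_k.+1} -> 'M[C]_n -> C :=
  fun a => ind_act g (F a).

(* Sym^k(V) has the monomial basis X^m, |m| = k, and the monomial matrix with
   permutation s and diagonal d sends X^m to a nonzero multiple of X^(m o s^-1).
   The orbits of monomials are therefore indexed by their type a (a_j = number of
   variables with exponent j), which ranges exactly over A_k^n.  The type-a orbit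
   contains the sorted monomial X^(m_a) (n - |a| exponents 0, then a_1 exponents 1,
   a_2 exponents 2, ...), whose stabiliser is the block-diagonal subgroup of the
   composition of tilde M((a_1),...,(a_k)), acting on the line C X^(m_a) by exactly
   the character that is induced.  By Frobenius reciprocity the map sending p to
   (a, x) |-> (coefficient of X^(m_a) in x . p) is an isomorphism; its inverse reads
   the coefficient of X^m off the value at a permutation matrix carrying m_a to m. *)

From mathcomp Require Import all_boot all_order all_algebra all_fingroup.
From mathcomp Require Import Rstruct complex mpoly.
From Stdlib Require Import FunctionalExtensionality.
Set Implicit Arguments. Unset Strict Implicit. Unset Printing Implicit Defensive.
Import GRing.Theory.
Local Open Scope ring_scope.

Definition mono_mx n (s : 'S_n) (d : 'I_n -> C) : 'M[C]_n :=
  \matrix_(i, j) (if i == s j then d j else 0).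

Lemma mono_mxM n (s t : 'S_n) (d e : 'I_n -> C) :
  mono_mx s d *m mono_mx t e = mono_mx (t * s) (fun j => d (t j) * e j).
Proof.
apply/matrixP => i j; rewrite !mxE (bigD1 (t j)) //= !mxE eqxx big1 ?addr0.
  by rewrite permM; case: eqP; rewrite ?mul0r.
by move=> l /negbTE ne; rewrite !mxE ne mulr0.
Qed.

Lemma mono_mx1 n : mono_mx 1 (fun _ : 'I_n => 1) = 1%:M.
Proof. by apply/matrixP => i j; rewrite !mxE perm1 eq_sym; case: eqP. Qed.

Lemma monomial_mono_mx n (s : 'S_n) (d : 'I_n -> C) :
  (forall j, d j != 0) -> monomial (mono_mx s d).
Proof.
move=> d_neq0; apply/andP; split; apply/forallP => i.
- apply/card1P; exists (s^-1 i)%g => j; rewrite !inE mxE.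
  case: (i =P s j) => [->|ne]; first by rewrite d_neq0 permK eqxx.
  by rewrite eqxx; apply/esym/eqP => ji; apply: ne; rewrite ji permKV.
- apply/card1P; exists (s i) => j; rewrite !inE mxE.
  by case: ifP => _; rewrite ?d_neq0 ?eqxx.
Qed.

Lemma monomialP n (g : 'M[C]_n) : monomial g ->
  exists s : 'S_n, exists2 d : 'I_n -> C, forall j, d j != 0 & g = mono_mx s d.
Proof.
case/andP => /forallP row1 /forallP col1.
have [f f_nz f_uniq] : exists2 f : 'I_n -> 'I_n, forall j, g (f j) j != 0 &
    forall i j, g i j != 0 -> i = f j.
  exists (fun j => odflt j [pick i | g i j != 0]) => [j|i j gij].
    case: pickP => [i //|none]; have /card1P[i col] := col1 j.
    by move: (col i); rewrite !inE none eqxx.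
  case: pickP => [i' gi'j|none]; last by move: (none i); rewrite gij.
  have /card1P[i0 col] := col1 j.
  by move: (col i) (col i'); rewrite !inE gij gi'j => /esym/eqP-> /esym/eqP->.
have f_inj : injective f.
  move=> j1 j2 fj; have /card1P[j0 row] := row1 (f j1).
  by move: (row j1) (row j2); rewrite !inE f_nz fj f_nz => /esym/eqP-> /esym/eqP->.
exists (perm f_inj), (fun j => g (f j) j) => //.
apply/matrixP => i j; rewrite mxE permE.
case: eqP => [->//|ne]; apply/eqP; apply/negPn/negP => nz; exact: ne (f_uniq _ _ nz).
Qed.

Lemma monomialM n (x g : 'M[C]_n) : monomial x -> monomial g -> monomial (x *m g).
Proof.
move=> /monomialP[s [d d_nz ->]] /monomialP[t [e e_nz ->]].
by rewrite mono_mxM; apply: monomial_mono_mx => j; rewrite mulf_neq0.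
Qed.

Lemma monomialMr n (x g : 'M[C]_n) : monomial g -> monomial (x *m g) = monomial x.
Proof.
move=> mon_g; apply/idP/idP => [mon_xg|mon_x]; last exact: monomialM mon_x mon_g.
have /monomialP[s [d d_nz g_def]] := mon_g.
pose g' := mono_mx s^-1 (fun j => (d (s^-1 j)%g)^-1).
have gg' : g *m g' = 1%:M.
  rewrite g_def mono_mxM mulVg -mono_mx1; congr mono_mx.
  by apply: functional_extensionality => j; rewrite mulfV.
have mon_g' : monomial g' by apply: monomial_mono_mx => j; rewrite invr_eq0.
by have := monomialM mon_xg mon_g'; rewrite -mulmxA gg' mulmx1.
Qed.

Lemma comp_mpolyA (R : comNzRingType) n k l (p : {mpoly R[n]})
    (lr : n.-tuple {mpoly R[k]}) (lq : k.-tuple {mpoly R[l]}) :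
  p \mPo lr \mPo lq = p \mPo [tuple tnth lr i \mPo lq | i < n].
Proof.
rewrite (comp_mpolyEX p lr) raddf_sum /= (comp_mpolyEX p); apply: eq_bigr => m _.
rewrite comp_mpolyZ !comp_mpolyX rmorph_prod; congr (_ *: _).
by apply: eq_bigr => i _; rewrite rmorphXn tnth_mktuple.
Qed.

Lemma comp_mpoly_sumX (R : comNzRingType) n k (lq : n.-tuple {mpoly R[k]})
    (c : 'I_n -> R) :
  (\sum_(i < n) c i *: 'X_i) \mPo lq = \sum_(i < n) c i *: tnth lq i.
Proof.
rewrite raddf_sum /=; apply: eq_bigr => i _.
by rewrite comp_mpolyZ comp_mpolyXU -tnth_nth.
Qed.

Lemma sym_actM n (x g : 'M[C]_n) p : sym_act x (sym_act g p) = sym_act (x *m g) p.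
Proof.
rewrite /sym_act comp_mpolyA; apply: (congr1 (fun lq => comp_mpoly lq p)).
apply: eq_from_tnth => j; rewrite !tnth_mktuple comp_mpoly_sumX.
under eq_bigr do rewrite tnth_mktuple scaler_sumr.
rewrite exchange_big /=; apply: eq_bigr => l _; rewrite mxE scaler_suml.
by apply: eq_bigr => r _; rewrite scalerA mulrC.
Qed.

Lemma sym_actEX n (g : 'M[C]_n) p :
  sym_act g p = \sum_(m <- msupp p) p@_m *: sym_act g 'X_[m].
Proof. exact: comp_mpolyEX. Qed.

Lemma sym_act_mono_mxX n (s : 'S_n) (d : 'I_n -> C) (m : 'X_{1..n}) :
  sym_act (mono_mx s d) 'X_[m] =
  (\prod_(j < n) d j ^+ m j) *: 'X_[[multinom m (s^-1 i)%g | i < n]].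
Proof.
rewrite /sym_act comp_mpolyX (@mpolyXE _ C s).
under eq_bigr => j _.
  rewrite tnth_mktuple (bigD1 (s j)) //= mxE eqxx big1 ?addr0; last first.
    by move=> l /negbTE ne; rewrite mxE ne scale0r.
  rewrite exprZn; over.
rewrite scaler_prod; congr (_ *: _); apply: eq_bigr => j _.
by rewrite mnmE permK.
Qed.

Lemma mcoeff_sym_act_mono_mx n (s : 'S_n) (d : 'I_n -> C) p (m : 'X_{1..n}) :
  (sym_act (mono_mx s d) p)@_m =
  p@_[multinom m (s j) | j < n] * \prod_(j < n) d j ^+ m (s j).
Proof.
set ms := [multinom m (s j) | j < n].
have moved (m' : 'X_{1..n}) : ([multinom m' (s^-1 i)%g | i < n] == m) = (m' == ms).
  apply/eqP/eqP => [m'_m|->]; apply/mnmP => i; rewrite !mnmE ?permK //.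
    by rewrite -m'_m mnmE permK.
  by rewrite permKV.
have weight : \prod_(j < n) d j ^+ m (s j) = \prod_(j < n) d j ^+ ms j.
  by apply: eq_bigr => j _; rewrite mnmE.
rewrite sym_actEX raddf_sum /=.
under eq_bigr => m' _ do rewrite sym_act_mono_mxX !mcoeffZ mcoeffX moved.
rewrite weight; have [ms_supp|ms_nsupp] := boolP (ms \in msupp p).
  rewrite (bigD1_seq ms) ?msupp_uniq //= eqxx mulr1.
  by rewrite [X in _ + X]big1 ?addr0 // => m' /negbTE->; rewrite !mulr0.
rewrite [LHS]big1_seq => [|m' m'_supp]; last first.
  have /negbTE-> : m' != ms by apply: contraNneq ms_nsupp => <-.
  by rewrite !mulr0.
by move: ms_nsupp; rewrite mcoeff_msupp negbK => /eqP->; rewrite mul0r.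
Qed.

Lemma block_cons (s : nat) nu i :
  block (s :: nu) i = if (i < s)%N then 0%N else (block nu (i - s)).+1.
Proof.
rewrite /block /= take0 addn0; case: ltnP => // le_si; congr S.
have -> : iota 1 (size nu) = map S (iota 0 (size nu)) by rewrite -(iotaDl 1 0).
rewrite find_map; apply: eq_find => j /=.
by rewrite ltn_subLR.
Qed.

Lemma block_lt_size nu i : (i < sumn nu)%N -> (block nu i < size nu)%N.
Proof.
case: nu => [//|s nu] lt_i; rewrite /block -[X in (_ < X)%N](size_iota 0) -has_find.
by apply/hasP; exists (size nu); rewrite ?mem_iota //= take_size.
Qed.

Section BlocksOfPairs.
Variables (T : eqType) (x0 : T) (L : seq (nat * T)).

Local Notation blocks_seq := (flatten [seq nseq l.1 l.2 | l <- L]).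

Lemma nth_unzip2_block i : nth x0 (unzip2 L) (block (unzip1 L) i) = nth x0 blocks_seq i.
Proof.
elim: L i => [|[s w] L' IH] i /=; first by rewrite !nth_nil.
by rewrite block_cons nth_cat size_nseq; case: ltnP => lt_i /=; rewrite ?nth_nseq ?lt_i.
Qed.

Lemma block_eq_nth i j : uniq (unzip2 L) ->
  (i < sumn (unzip1 L))%N -> (j < sumn (unzip1 L))%N ->
  nth x0 blocks_seq i = nth x0 blocks_seq j -> block (unzip1 L) i = block (unzip1 L) j.
Proof.
move=> uniqL lt_i lt_j; rewrite -!nth_unzip2_block => eq_ij; apply/eqP.
have sizeL : size (unzip1 L) = size (unzip2 L) by rewrite !size_map.
by rewrite -(nth_uniq x0 _ _ uniqL) ?eq_ij // -sizeL block_lt_size.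
Qed.

End BlocksOfPairs.

Section ExpPattern.
Variable k : nat.

Definition exp_pattern (c0 : nat) (c : 'I_k -> nat) : seq nat :=
  nseq c0 0%N ++ flatten [seq nseq (c j) j.+1 | j <- enum 'I_k].

Lemma size_exp_pattern c0 c : size (exp_pattern c0 c) = (c0 + \sum_(j < k) c j)%N.
Proof.
rewrite size_cat size_nseq size_flatten /shape -map_comp sumnE big_map big_enum /=.
by under eq_bigr do rewrite size_nseq.
Qed.

Lemma sumn_exp_pattern c0 c : sumn (exp_pattern c0 c) = (\sum_(j < k) j.+1 * c j)%N.
Proof.
rewrite sumn_cat sumn_flatten sumn_nseq mul0n add0n -map_comp sumnE big_map big_enum /=.
by under eq_bigr do rewrite sumn_nseq.
Qed.

Lemma count_exp_pattern c0 c x :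
  count_mem x (exp_pattern c0 c) = ((0 == x) * c0 + \sum_(j < k) (j.+1 == x) * c j)%N.
Proof.
rewrite count_cat count_nseq count_flatten -map_comp sumnE big_map big_enum /=.
by under eq_bigr do rewrite count_nseq.
Qed.

Lemma eq_exp_pattern c0 c c' : c =1 c' -> exp_pattern c0 c = exp_pattern c0 c'.
Proof. by move=> eq_c; rewrite /exp_pattern (eq_map (fun j => congr1 (nseq^~ _) (eq_c j))). Qed.

Lemma perm_exp_pattern (s : seq nat) : all (leq^~ k) s ->
  perm_eq s (exp_pattern (count_mem 0%N s) (fun j => count_mem j.+1 s)).
Proof.
move=> /allP s_le_k; apply/allP => x _; apply/eqP; rewrite count_exp_pattern.
case: x => [|x]; first by rewrite mul1n big1 ?addn0.
rewrite mul0n add0n; have [lt_xk|le_kx] := ltnP x k.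
  rewrite (bigD1 (Ordinal lt_xk)) //= eqxx mul1n big1 ?addn0 // => j neq_j.
  rewrite eqSS (_ : (j == x :> nat) = false) //.
  by apply: contraNF neq_j => /eqP eq_jx; apply/eqP/val_inj.
rewrite big1 => [|j _]; last by rewrite eqSS ltn_eqF // (leq_trans (ltn_ord j) le_kx).
by apply/count_memPn/negP => /s_le_k; rewrite leqNgt ltnS le_kx.
Qed.

End ExpPattern.

(* The [inord] truncation is harmless in degree k, see [mnm_typeE]. *)
Definition mnm_type n k (m : 'X_{1..n}) : {ffun 'I_k -> 'I_k.+1} :=
  [ffun j : 'I_k => inord (count_mem j.+1 m)].

Arguments mnm_type {n} k m.

Definition type_seq n k (a : {ffun 'I_k -> 'I_k.+1}) : seq nat :=
  exp_pattern (n - \sum_(j < k) a j) (fun j => a j).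

Definition type_rep n k (a : {ffun 'I_k -> 'I_k.+1}) : 'X_{1..n} :=
  [multinom nth 0%N (type_seq n a) i | i < n].

Lemma count_mem_mul_le_sumn v (s : seq nat) : (count_mem v s * v <= sumn s)%N.
Proof.
elim: s => //= x s IHs; case: eqP => [->|_] /=; first by rewrite mulSn leq_add2l.
exact: leq_trans IHs (leq_addl _ _).
Qed.

Lemma mdeg_sumn n (m : 'X_{1..n}) : mdeg m = sumn m.
Proof. by rewrite sumnE. Qed.

Section MonomialType.
Variables (n k : nat) (m : 'X_{1..n}).
Hypothesis mdeg_m : mdeg m = k.

Lemma mnm_typeE j : mnm_type k m j = count_mem j.+1 m :> nat.
Proof.
have := count_mem_mul_le_sumn j.+1 m; rewrite -mdeg_sumn mdeg_m => le_k.
by rewrite ffunE inordK // ltnS (leq_trans _ le_k) // leq_pmulr.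
Qed.

Let count_type : (\sum_(j < k) mnm_type k m j = \sum_(j < k) count_mem j.+1 m)%N.
Proof. by apply: eq_bigr => j _; rewrite mnm_typeE. Qed.

Lemma perm_mnm_exp_pattern :
  perm_eq m (exp_pattern (count_mem 0%N m) (fun j : 'I_k => count_mem j.+1 m)).
Proof.
apply: perm_exp_pattern; apply/allP => _ /tnthP[i ->].
by rewrite -mdeg_m mdegE -mnm_tnth (bigD1 i) //= leq_addr.
Qed.

Let size_m : n = (count_mem 0%N m + \sum_(j < k) count_mem j.+1 m)%N.
Proof. by rewrite -size_exp_pattern -(perm_size perm_mnm_exp_pattern) size_tuple. Qed.

Lemma type_seq_mnm_type :
  type_seq n (mnm_type k m) = exp_pattern (count_mem 0%N m) (fun j : 'I_k => count_mem j.+1 m).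
Proof.
rewrite /type_seq count_type {1}size_m addnK; apply: eq_exp_pattern => j.
exact: mnm_typeE.
Qed.

Lemma perm_mnm_type_seq : perm_eq m (type_seq n (mnm_type k m)).
Proof. by rewrite type_seq_mnm_type perm_mnm_exp_pattern. Qed.

Lemma in_A_mnm_type : in_A n k (mnm_type k m).
Proof.
apply/andP; split.
  apply/eqP; rewrite -[RHS]mdeg_m mdeg_sumn (perm_sumn perm_mnm_exp_pattern).
  by rewrite sumn_exp_pattern; apply: eq_bigr => j _; rewrite mnm_typeE.
by rewrite count_type (leq_trans (leq_addl (count_mem 0%N m) _)) // -size_m.
Qed.

End MonomialType.

Section TypeRep.
Variables (n k : nat) (a : {ffun 'I_k -> 'I_k.+1}).
Hypothesis Aa : in_A n k a.

Lemma type_repE : type_rep n a = type_seq n a :> seq nat.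
Proof.
have size_a : size (type_seq n a) = n.
  by case/andP: Aa => _ le_n; rewrite size_exp_pattern subnK.
rewrite -[RHS](mkseq_nth 0%N) size_a /mkseq -val_enum_ord -map_comp.
by apply/eq_map.
Qed.

Lemma mnm_type_rep : mnm_type k (type_rep n a) = a.
Proof.
apply/ffunP => j; apply: val_inj; rewrite ffunE /= type_repE count_exp_pattern.
rewrite mul0n add0n (bigD1 j) //= eqxx mul1n big1 ?addn0 ?inordK // => i neq_ij.
by rewrite eqSS (inj_eq val_inj) (negbTE neq_ij).
Qed.

Lemma mdeg_type_rep : mdeg (type_rep n a) = k.
Proof.
case/andP: Aa => /eqP sum_a _.
by rewrite mdeg_sumn type_repE sumn_exp_pattern.
Qed.

End TypeRep.

Lemma mnm_type_perm n k (m : 'X_{1..n}) (s : 'S_n) :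
  mnm_type k [multinom m (s i) | i < n] = mnm_type k m.
Proof.
have perm_ms : perm_eq [multinom m (s i) | i < n] m by apply/tuple_permP; exists s.
by apply/ffunP => j; rewrite !ffunE (seq.permP perm_ms).
Qed.

Lemma mnm_type_orbit n k (m : 'X_{1..n}) : mdeg m = k ->
  exists s : 'S_n, m = [multinom type_rep n (mnm_type k m) (s i) | i < n].
Proof.
move=> mdeg_m; have := perm_mnm_type_seq mdeg_m.
rewrite -type_repE ?in_A_mnm_type // => /tuple_permP[s m_s].
by exists s; do 2!apply: val_inj.
Qed.

Lemma flatten_seq1_filter (T U : Type) (b : pred T) (f : T -> U) (g : T -> seq U) s :
  (forall x, g x = if b x then [:: f x] else [::]) ->
  flatten (map g s) = [seq f x | x <- s & b x].
Proof. by move=> gE; elim: s => //= x s ->; rewrite gE; case: (b x). Qed.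

Definition mtilde_blocks n k (a : {ffun 'I_k -> 'I_k.+1}) : seq (nat * int) :=
  let r := (n - \sum_(j < k) a j)%N in
  (if r == 0%N then [::] else [:: (r, 0%Z)]) ++
  [seq (nat_of_ord (a j), Posz j.+1) | j <- enum 'I_k & a j != 0 :> nat].

Section MtildeBlocks.
Variables (n k : nat) (a : {ffun 'I_k -> 'I_k.+1}).

Local Notation nu := (mtilde_comp n (tuple_parts a)).
Local Notation w := (mtilde_wts n (tuple_parts a)).
Local Notation L := (mtilde_blocks n a).

Lemma sumn_tuple_parts : sumn (map sumn (tuple_parts a)) = (\sum_(j < k) a j)%N.
Proof.
rewrite -map_comp sumnE big_map big_enum /=; apply: eq_bigr => j _.
by rewrite /one_row; case: eqP => [->|_] //=; rewrite addn0.
Qed.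

Lemma mtilde_compE : nu = unzip1 L.
Proof.
rewrite /mtilde_comp /unzip1 sumn_tuple_parts map_cat -map_comp /=.
congr (_ ++ _); first by case: ifP.
by apply: flatten_seq1_filter => j; rewrite /one_row; case: eqP.
Qed.

Lemma mtilde_wtsE : w = unzip2 L.
Proof.
rewrite /mtilde_wts /unzip2 sumn_tuple_parts map_cat -map_comp /=.
congr (_ ++ _); first by case: ifP.
rewrite size_map size_enum_ord -val_enum_ord -map_comp.
apply: flatten_seq1_filter => j /=.
by rewrite (nth_map j) ?size_enum_ord // nth_ord_enum /one_row; case: eqP.
Qed.

Lemma flatten_mtilde_blocks : flatten [seq nseq l.1 l.2 | l <- L] = map Posz (type_seq n a).
Proof.
rewrite map_cat flatten_cat /type_seq /exp_pattern map_cat map_nseq; congr (_ ++ _).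
  by case: eqP => [->|] //=; rewrite cats0.
elim: (enum 'I_k) => //= j s IHs; rewrite map_cat map_nseq -IHs.
by case: eqP => [->|] //=.
Qed.

Lemma uniq_mtilde_wts : uniq (unzip2 L).
Proof.
rewrite /unzip2 map_cat cat_uniq -map_comp; apply/and3P; split.
- by case: ifP.
- by case: ifP => _; apply/hasPn => _ /mapP[j _ ->].
- by rewrite map_inj_uniq ?(filter_uniq _ (enum_uniq _)) // => i j [] /val_inj.
Qed.

Lemma sumn_mtilde_comp : (\sum_(j < k) a j <= n)%N -> sumn (unzip1 L) = n.
Proof.
move=> le_n; rewrite /unzip1 map_cat sumn_cat.
have -> : sumn [seq l.1 | l <- [seq (nat_of_ord (a j), Posz j.+1)
                                  | j <- enum 'I_k & a j != 0 :> nat]] = (\sum_(j < k) a j)%N.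
  transitivity (\sum_(j <- enum 'I_k) a j)%N; last by rewrite big_enum.
  elim: (enum 'I_k) => [|j s IHs] /=; first by rewrite big_nil.
  by rewrite big_cons -IHs; case: eqP => [->|_].
by rewrite -[RHS](subnK le_n); case: (n - _)%N => [|r] //=; rewrite addn0.
Qed.

Let nth_type_seq (i : 'I_n) : nth 0 (map Posz (type_seq n a)) i = (type_rep n a i)%:Z.
Proof.
rewrite mnmE; have [lt_i|le_i] := ltnP i (size (type_seq n a)).
  by rewrite (nth_map 0%N).
by rewrite !nth_default ?size_map.
Qed.

Lemma mtilde_wts_block (i : 'I_n) : nth 0 w (block nu i) = (type_rep n a i)%:Z.
Proof.
by rewrite mtilde_wtsE mtilde_compE nth_unzip2_block flatten_mtilde_blocks nth_type_seq.
Qed.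

Lemma eq_mtilde_block (i j : 'I_n) : in_A n k a ->
  (block nu i == block nu j) = (type_rep n a i == type_rep n a j).
Proof.
case/andP=> _ le_n; apply/eqP/eqP => [eq_ij|eq_ij].
  by have := mtilde_wts_block i; rewrite eq_ij mtilde_wts_block => -[].
have lt_n (l : 'I_n) : (l < sumn (unzip1 L))%N.
  by rewrite sumn_mtilde_comp.
rewrite mtilde_compE (block_eq_nth (x0 := 0) uniq_mtilde_wts (lt_n i) (lt_n j)) //.
by rewrite flatten_mtilde_blocks !nth_type_seq eq_ij.
Qed.

Lemma block_char_mono_mx (s : 'S_n) (d : 'I_n -> C) :
  block_char nu w (mono_mx s d) = \prod_(j < n) d j ^+ type_rep n a (s j).
Proof.
rewrite /block_char (reindex_inj (@perm_inj _ s)) /=; apply: eq_bigr => j _.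
rewrite mtilde_wts_block -exprnP (bigD1 j) //= mxE eqxx big1 ?addr0 // => l ne_lj.
by rewrite mxE (inj_eq perm_inj) eq_sym (negbTE ne_lj).
Qed.

Lemma in_mtilde_subgroup_mono_mx (s : 'S_n) (d : 'I_n -> C) :
  in_A n k a -> (forall j, d j != 0) ->
  in_block_subgroup nu (mono_mx s d) = [forall j, type_rep n a (s j) == type_rep n a j].
Proof.
move=> Aa d_nz; rewrite /in_block_subgroup monomial_mono_mx //=.
apply/forallP/forallP => [blocks j | types i].
  have /forallP/(_ j) := blocks (s j).
  by rewrite mxE eqxx d_nz -eq_mtilde_block.
apply/forallP => j; rewrite mxE; case: (i =P s j) => [->|_]; last by rewrite eqxx.
by rewrite d_nz eq_mtilde_block // types.
Qed.

End MtildeBlocks.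

Lemma mtilde_mono_mx n k (a : {ffun 'I_k -> 'I_k.+1}) (f : 'M[C]_n -> C)
    (s t : 'S_n) (d : 'I_n -> C) :
  in_A n k a -> MtildeSpace n (tuple_parts a) f -> (forall j, d j != 0) ->
  (forall j, type_rep n a (s j) = type_rep n a (t j)) ->
  f (mono_mx s d) = \prod_(j < n) d j ^+ type_rep n a (s j) * f (mono_mx t (fun _ => 1)).
Proof.
move=> Aa [_ f_ind] d_nz st_eq.
pose h := mono_mx (t^-1 * s)%g (fun j => d (t^-1 j)%g).
have h_t : mono_mx s d = h *m mono_mx t (fun _ => 1).
  rewrite mono_mxM mulgA mulgV mul1g; congr mono_mx.
  by apply: functional_extensionality => j; rewrite permK mulr1.
have h_sub : in_block_subgroup (mtilde_comp n (tuple_parts a)) h.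
  rewrite in_mtilde_subgroup_mono_mx //; apply/forallP => j.
  by rewrite permM st_eq permKV.
rewrite h_t f_ind ?monomial_mono_mx ?oner_neq0 //.
rewrite [block_char _ _ h]block_char_mono_mx; congr (_ * _).
rewrite (reindex_inj (@perm_inj _ t)) /=; apply: eq_bigr => j _.
by rewrite permK permM permK.
Qed.

Definition sym_to_dsum n k (p : {mpoly C[n]}) (a : {ffun 'I_k -> 'I_k.+1})
    (x : 'M[C]_n) : C :=
  if monomial x && in_A n k a then (sym_act x p)@_(type_rep n a) else 0.

Arguments sym_to_dsum {n} k p a x.

Section SymToDsum.
Variables n k : nat.

Lemma sym_to_dsum_linear (c : C) (p q : {mpoly C[n]}) :
  sym_to_dsum k (c *: p + q) = fun a x => c * sym_to_dsum k p a x + sym_to_dsum k q a x.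
Proof.
apply: functional_extensionality => a; apply: functional_extensionality => x.
rewrite /sym_to_dsum; case: (_ && _); last by rewrite mulr0 addr0.
by rewrite /sym_act comp_mpolyD comp_mpolyZ mcoeffD mcoeffZ.
Qed.

Lemma sym_to_dsum_equivariant (g : 'M[C]_n) p : monomial g ->
  sym_to_dsum k (sym_act g p) = dsum_act g (sym_to_dsum k p).
Proof.
move=> mon_g; apply: functional_extensionality => a; apply: functional_extensionality => x.
by rewrite /dsum_act /ind_act /sym_to_dsum (monomialMr x mon_g) sym_actM.
Qed.

Lemma sym_to_dsum_in_dsum p : DSumSpace n k (sym_to_dsum k p).
Proof.
move=> a; split=> [Aa|nAa]; last first.
  by apply: functional_extensionality => x; rewrite /sym_to_dsum (negbTE nAa) andbF.
split=> [x /negbTE nmon_x|h x h_sub mon_x]; first by rewrite /sym_to_dsum nmon_x.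
have /monomialP[s [d d_nz h_def]] : monomial h by case/andP: h_sub.
rewrite h_def in_mtilde_subgroup_mono_mx // in h_sub.
have rep_s : [multinom type_rep n a (s j) | j < n] = type_rep n a.
  by apply/mnmP => j; rewrite mnmE; apply/eqP/(forallP h_sub).
rewrite /sym_to_dsum monomialM ?h_def ?monomial_mono_mx // mon_x Aa /= -sym_actM.
by rewrite [LHS]mcoeff_sym_act_mono_mx rep_s block_char_mono_mx mulrC.
Qed.

Lemma sym_to_dsum_mono_mx1 p (m : 'X_{1..n}) (s : 'S_n) : mdeg m = k ->
  m = [multinom type_rep n (mnm_type k m) (s i) | i < n] ->
  sym_to_dsum k p (mnm_type k m) (mono_mx s (fun _ => 1)) = p@_m.
Proof.
move=> mdeg_m m_s; rewrite /sym_to_dsum monomial_mono_mx ?oner_neq0 // in_A_mnm_type //=.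
by rewrite mcoeff_sym_act_mono_mx -m_s big1 ?mulr1 // => j _; rewrite expr1n.
Qed.

Lemma sym_to_dsum_inj p : SymSpace n k p -> sym_to_dsum k p = (fun _ _ => 0) -> p = 0.
Proof.
move=> /allP homog_p p0; apply/mpolyP => m; rewrite mcoeff0.
have [m_supp|] := boolP (m \in msupp p); last by rewrite mcoeff_msupp negbK => /eqP.
have mdeg_m : mdeg m = k by apply/eqP/homog_p.
have [s m_s] := mnm_type_orbit mdeg_m.
by rewrite -(sym_to_dsum_mono_mx1 p mdeg_m m_s) p0.
Qed.

End SymToDsum.

Definition orbit_perm n k (m : 'X_{1..n}) : 'S_n :=
  odflt 1%g [pick s : 'S_n | m == [multinom type_rep n (mnm_type k m) (s i) | i < n]].

Lemma orbit_permP n k (m : 'X_{1..n}) : mdeg m = k ->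
  m = [multinom type_rep n (mnm_type k m) (orbit_perm k m i) | i < n].
Proof.
move=> mdeg_m; rewrite /orbit_perm; case: pickP => [s /eqP //|none].
by have [s m_s] := mnm_type_orbit mdeg_m; move: (none s); rewrite -m_s eqxx.
Qed.

Definition dsum_to_sym n k (F : {ffun 'I_k -> 'I_k.+1} -> 'M[C]_n -> C) : {mpoly C[n]} :=
  \sum_(m : 'X_{1..n < k.+1} | mdeg m == k)
    F (mnm_type k m) (mono_mx (orbit_perm k m) (fun _ => 1)) *: 'X_[m].

Section DsumToSym.
Variables (n k : nat) (F : {ffun 'I_k -> 'I_k.+1} -> 'M[C]_n -> C).

Lemma mcoeff_dsum_to_sym m : (dsum_to_sym F)@_m =
  if mdeg m == k then F (mnm_type k m) (mono_mx (orbit_perm k m) (fun _ => 1)) else 0.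
Proof.
rewrite raddf_sum /=; under eq_bigr do rewrite mcoeffZ mcoeffX.
case: eqP => [mdeg_m|mdeg_m].
  have lt_m : (mdeg m < k.+1)%N by rewrite mdeg_m.
  rewrite (bigD1 (BMultinom lt_m)) ?mdeg_m //= eqxx mulr1 big1 ?addr0 // => m' /andP[_ ne_m'].
  rewrite (_ : (bmnm m' == m) = false) ?mulr0 //.
  by apply: contraNF ne_m' => /eqP m'_m; apply/eqP/val_inj.
rewrite big1 // => m' /eqP mdeg_m'.
have /negbTE-> : bmnm m' != m by apply/eqP => m'_m; apply: mdeg_m; rewrite -m'_m.
by rewrite mulr0.
Qed.

Lemma dsum_to_sym_homog : SymSpace n k (dsum_to_sym F).
Proof.
apply/allP => m; rewrite mcoeff_msupp mcoeff_dsum_to_sym.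
by case: (mdeg m =P k) => [/eqP|_]; rewrite ?eqxx.
Qed.

End DsumToSym.

Lemma sym_to_dsumK n k (F : {ffun 'I_k -> 'I_k.+1} -> 'M[C]_n -> C) :
  DSumSpace n k F -> sym_to_dsum k (dsum_to_sym F) = F.
Proof.
move=> F_dsum; apply: functional_extensionality => a; apply: functional_extensionality => x.
rewrite /sym_to_dsum; have [Aa|nAa] := boolP (in_A n k a); last first.
  by rewrite andbF ((F_dsum a).2 nAa).
have F_a := (F_dsum a).1 Aa.
have [mon_x|nmon_x] := boolP (monomial x); last by case: F_a => ->.
have [s [d d_nz ->]] := monomialP mon_x.
set m := [multinom type_rep n a (s j) | j < n].
have mdeg_m : mdeg m = k by rewrite mdeg_mperm mdeg_type_rep.
have type_m : mnm_type k m = a by rewrite mnm_type_perm mnm_type_rep.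
rewrite /= mcoeff_sym_act_mono_mx -/m mcoeff_dsum_to_sym mdeg_m eqxx type_m mulrC.
rewrite (mtilde_mono_mx (t := orbit_perm k m) Aa F_a d_nz) // => j.
by have := congr1 (fun m' : 'X_{1..n} => m' j) (orbit_permP mdeg_m); rewrite !mnmE type_m.
Qed.

Theorem proposition3p5 (n k : nat) :
  exists Phi : {mpoly C[n]} -> {ffun 'I_k -> 'I_k.+1} -> 'M[C]_n -> C,
    [/\ (* Phi is C-linear *)
        (forall (c : C) (p q : {mpoly C[n]}),
           Phi (c *: p + q) = fun a x => c * Phi p a x + Phi q a x),
        (* Phi maps Sym^k(V) into the direct sum *)
        (forall p, SymSpace n k p -> DSumSpace n k (Phi p)),
        (* Phi is injective on Sym^k(V) *)
        (forall p, SymSpace n k p -> Phi p = (fun _ _ => 0) -> p = 0),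
        (* Phi is onto the direct sum *)
        (forall F, DSumSpace n k F -> exists2 p, SymSpace n k p & Phi p = F) &
        (* Phi is T \rtimes S_n-equivariant *)
        (forall (g : 'M[C]_n) p, monomial g -> SymSpace n k p ->
           Phi (sym_act g p) = dsum_act g (Phi p))].
Proof.
exists (sym_to_dsum k); split.
- exact: sym_to_dsum_linear.
- by move=> p _; apply: sym_to_dsum_in_dsum.
- exact: sym_to_dsum_inj.
- by move=> F F_dsum; exists (dsum_to_sym F); [apply: dsum_to_sym_homog | apply: sym_to_dsumK].
- by move=> g p mon_g _; apply: sym_to_dsum_equivariant.
Qed.
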